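(* Let $S$ be a numerical semigroup with minimal generators $a_1<a_2<\cdots<a_\nu$ ($\nu\ge2$), multiplicity $\mu=a_1$ and conductor $c$, and suppose $a_2>\frac{c+\mu}{3}$. Let $P=\{a_1,\dots,a_\nu\}$, $P_1=\{a\in P\setminus\{\mu\}: \tfrac13(c+\mu)<a<\tfrac12(c+\mu)\}$, $P_2=\{a\in P\setminus\{\mu\}: \tfrac12(c+\mu)\le a<\tfrac23(c+\mu)\}$, $q_i=|P_i|$, and $L=\{x\in S:0\le x<c\}$. Let $\sigma$ be the maximal cardinality of an independent set of Apéry pairs. Then $$|L|\ge\left\lfloor\frac{c}{\mu}\right\rfloor(1+\sigma)+\left(\left\lfloor\frac12\frac{c}{\mu}-\frac12\right\rfloor+1\right)(q_1-\sigma)+\left(\left\lfloor\frac13\frac{c}{\mu}-\frac23\right\rfloor+1\right)(q_2-\sigma).$$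
   Context: A numerical semigroup is a submonoid $S\subseteq\mathbb{N}$ with finite complement; $\nu$ is the number of minimal generators, $\mu$ (multiplicity) the smallest one, and $c$ (conductor) the least integer with $c+\mathbb{N}\subseteq S$. The Apéry set of $S$ (with respect to $\mu$) is $\mathrm{Ap}(S)=\{x\in S: x-\mu\notin S\}$. An Apéry pair is a pair $(a,b)\in P_1\times P_2$ with $a+b\in\mathrm{Ap}(S)$. A set $\{(a_i,b_i)\}_{i=1}^n$ of Apéry pairs is independent if $a_i\ne a_j$ and $b_i\ne b_j$ for all $i\ne j$. *)

From mathcomp Require Import all_boot all_order all_algebra.
Set Implicit Arguments. Unset Strict Implicit. Unset Printing Implicit Defensive.

Definition numerical_semigroup (S : pred nat) : Prop :=
  [/\ S 0, (forall x y, S x -> S y -> S (x + y)) &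
      exists N, forall n, N <= n -> S n].

Definition is_multiplicity (S : pred nat) (mu : nat) : Prop :=
  [/\ 0 < mu, S mu & forall x, 0 < x -> S x -> mu <= x].

Definition is_conductor (S : pred nat) (c : nat) : Prop :=
  (forall n, c <= n -> S n) /\
  (forall c', (forall n, c' <= n -> S n) -> c <= c').

Definition mingen (S : pred nat) (a : nat) : bool :=
  [&& 0 < a, S a & ~~ [exists x : 'I_a, (0 < (x : nat)) && S x && S (a - x)]].

Definition apery (S : pred nat) (mu x : nat) : bool :=
  S x && ((x < mu) || ~~ S (x - mu)).

Definition P1 (S : pred nat) (mu c : nat) : seq nat :=
  [seq a <- iota 0 (c + mu) |
     [&& mingen S a, a != mu, c + mu < 3 * a & 2 * a < c + mu]].
Definition P2 (S : pred nat) (mu c : nat) : seq nat :=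
  [seq a <- iota 0 (c + mu) |
     [&& mingen S a, a != mu, c + mu <= 2 * a & 3 * a < 2 * (c + mu)]].

Definition apery_pair (S : pred nat) (mu c : nat) (p : nat * nat) : bool :=
  [&& p.1 \in P1 S mu c, p.2 \in P2 S mu c & apery S mu (p.1 + p.2)].

Definition independent (S : pred nat) (mu c : nat) (s : seq (nat * nat)) : bool :=
  [&& all (apery_pair S mu c) s, uniq (map fst s) & uniq (map snd s)].

Definition is_max_indep (S : pred nat) (mu c sigma : nat) : Prop :=
  (exists s, independent S mu c s /\ size s = sigma) /\
  (forall s, independent S mu c s -> size s <= sigma).

Definition Lset (S : pred nat) (c : nat) : seq nat := [seq x <- iota 0 c | S x].

(* Each w in the Apery set starts a progression w, w + mu, w + 2 mu, ... inside S,
   with chain_len mu c w terms below c, and the progressions of distinct Apery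
   elements are disjoint since Apery elements are pairwise incongruent modulo mu.
   Applied to 0 and to the minimal generators in P1 and P2 (which are Apery
   elements), this bounds |L| by a sum of chain lengths.  The chain of 0 has at
   least c/mu terms; for a pair (a, b) of an independent set, a + b is an Apery
   element, hence a + b < c + mu, and the chains of a and b together have at
   least c/mu terms; any other a in P1 (resp. P2) satisfies 2a < c + mu
   (resp. 3a < 2(c + mu)), so its chain has at least floor((c + mu)/(2 mu))
   (resp. floor((c + mu)/(3 mu))) terms, which are the floors of the statement. *)

From mathcomp Require Import all_boot all_order all_algebra.
From mathcomp Require Import zify.
Import GRing.Theory.

Set Implicit Arguments.
Unset Strict Implicit.
Unset Printing Implicit Defensive.

Definition chain_len (mu c w : nat) : nat := (c + mu - 1 - w) %/ mu.

Section ChainLength.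
Variables (mu c : nat).
Hypothesis mu_gt0 : 0 < mu.

Lemma ltn_chain_len w k : (k < chain_len mu c w) = (w + k * mu < c).
Proof. by rewrite /chain_len leq_divRL // mulSn; apply/idP/idP; lia. Qed.

Lemma leq_chain_len w k : w + k * mu < c + mu -> k <= chain_len mu c w.
Proof. by case: k => // k; rewrite ltn_chain_len mulSn; lia. Qed.

Lemma leq_divn_chain_len m w :
  m.+1 * w < m * (c + mu) -> (c + mu) %/ (m.+1 * mu) <= chain_len mu c w.
Proof.
move=> hw; apply: leq_chain_len; rewrite -(ltn_pmul2l (ltn0Sn m)) mulnDr.
have := leq_divM (c + mu) (m.+1 * mu); nia.
Qed.

Lemma chain_len_pair a b :
  a + b < c + mu -> c %/ mu <= chain_len mu c a + chain_len mu c b.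
Proof.
have end_ge w : c <= w + chain_len mu c w * mu by rewrite leqNgt -ltn_chain_len ltnn.
move=> hab; rewrite -ltnS -(ltn_pmul2r mu_gt0).
have := leq_divM c mu; have := end_ge a; have := end_ge b; nia.
Qed.

Lemma chain_len0 : c %/ mu <= chain_len mu c 0.
Proof. by apply: leq_div2r; lia. Qed.

End ChainLength.

Lemma mem_P1 (S : pred nat) (mu c a : nat) :
  a \in P1 S mu c -> [/\ mingen S a, a != mu & 2 * a < c + mu].
Proof. by rewrite mem_filter => /andP [/and4P [-> -> _ ->] _]. Qed.

Lemma mem_P2 (S : pred nat) (mu c b : nat) :
  b \in P2 S mu c -> [/\ mingen S b, b != mu, c + mu <= 2 * b & 3 * b < 2 * (c + mu)].
Proof. by rewrite mem_filter => /andP [/and4P [-> -> -> ->] _]. Qed.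

Lemma uniq_0_P1_P2 (S : pred nat) (mu c : nat) : uniq (0 :: P1 S mu c ++ P2 S mu c).
Proof.
rewrite /= cat_uniq !filter_uniq ?iota_uniq // mem_cat negb_or andbT.
rewrite !mem_filter /mingen ltnn /=; apply/hasPn => b /mem_P2 [_ _ hb _].
by apply/negP => /mem_P1 [_ _ ha]; lia.
Qed.

Lemma apery_lt_add_conductor (S : pred nat) (mu c x : nat) :
  (forall n, c <= n -> S n) -> apery S mu x -> x < c + mu.
Proof.
move=> S_ge_c /andP [_ /orP [lt_x_mu | S'x_mu]]; first lia.
by rewrite ltnNge; move: S'x_mu; apply: contra => le; apply: S_ge_c; lia.
Qed.

Section AperySet.
Variables (S : pred nat) (mu : nat).
Hypotheses (S_add : forall x y, S x -> S y -> S (x + y)) (S_mu : S mu).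

Lemma S_addmul w k : S w -> S (w + k * mu).
Proof.
move=> Sw; elim: k => [|k IHk]; first by rewrite addn0.
by rewrite mulSn addnCA addnC; apply: S_add.
Qed.

Lemma apery_addmulS w k : S w -> ~~ apery S mu (w + k.+1 * mu).
Proof.
move=> Sw; rewrite /apery negb_and negb_or negbK -leqNgt.
have -> : w + k.+1 * mu - mu = w + k * mu by rewrite mulSn; lia.
by apply/orP; right; rewrite S_addmul // andbT mulSn; lia.
Qed.

Hypothesis mu_gt0 : 0 < mu.

Lemma apery_addmul_inj w w' k k' :
  apery S mu w -> apery S mu w' -> w + k * mu = w' + k' * mu -> w = w'.
Proof.
wlog lt_ww' : w w' k k' / w < w'.
  move=> sym Aw Aw' E; case: (ltngtP w w') => [lt|lt|//].
    exact: (sym w w' k k').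
  by apply/esym/(sym w' w k' k).
move=> /andP [Sw _] Aw' E.
have [d def_k] : exists d, k = k' + d.+1.
  exists (k - k'.+1); suff : k' < k by lia.
  by rewrite -(ltn_pmul2r mu_gt0); lia.
have def_w' : w' = w + d.+1 * mu by move: E; rewrite def_k; nia.
by move: Aw'; rewrite def_w' (negbTE (apery_addmulS d Sw)).
Qed.

Lemma sum_chain_len_le_Lset c W :
  uniq W -> all (apery S mu) W ->
  \sum_(w <- W) chain_len mu c w <= size (Lset S c).
Proof.
move=> uW /allP AW.
set chains := [seq w + k * mu | w <- W, k <- iota 0 (chain_len mu c w)].
have size_chains : size chains = \sum_(w <- W) chain_len mu c w.
  by rewrite size_allpairs_dep sumnE big_map; under eq_bigr do rewrite size_iota.
have uniq_chains : uniq chains.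
  apply: allpairs_uniq_dep => [//|w _|]; first exact: iota_uniq.
  move=> _ _ /allpairsPdep [w [k [Ww _ ->]]] /allpairsPdep [w' [k' [Ww' _ ->]]] /= E.
  have eq_ww' := apery_addmul_inj (AW _ Ww) (AW _ Ww') E.
  by move: E; rewrite eq_ww' => /addnI/eqP; rewrite eqn_pmul2r // => /eqP ->.
rewrite -size_chains; apply: uniq_leq_size => // y /allpairsPdep [w [k [Ww]]].
rewrite mem_iota add0n ltn_chain_len // => k_lt ->.
by rewrite mem_filter mem_iota k_lt S_addmul //; case/andP: (AW _ Ww).
Qed.

Lemma mingen_apery a : mingen S a -> a != mu -> apery S mu a.
Proof.
case/and3P=> _ Sa /existsPn no_split a_neq_mu; rewrite /apery Sa /=.
case: ltnP => //= mu_le_a; apply/negP => S_amu.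
have mu_lt_a : mu < a by rewrite ltn_neqAle eq_sym a_neq_mu.
by move: (no_split (Ordinal mu_lt_a)); rewrite /= mu_gt0 S_mu S_amu.
Qed.

Lemma all_apery_0_P1_P2 c :
  S 0 -> all (apery S mu) (0 :: P1 S mu c ++ P2 S mu c).
Proof.
move=> S0; rewrite /= {1}/apery S0 mu_gt0 /=; apply/allP => a.
by rewrite mem_cat => /orP [/mem_P1 [] | /mem_P2 []] => *; apply: mingen_apery.
Qed.

End AperySet.

Lemma leq_sum_const (T : eqType) (l : seq T) (f : T -> nat) k :
  {in l, forall x, k <= f x} -> size l * k <= \sum_(x <- l) f x.
Proof.
move=> le_kf; rewrite -[size l]count_predT mulnC -iter_addn_0 -big_const_seq.
by rewrite !big_seq; apply: leq_sum.
Qed.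

Lemma leq_sum_uniq_subset (T : eqType) (F P : seq T) (f : T -> nat) k :
  uniq F -> uniq P -> {subset F <= P} -> {in P, forall x, k <= f x} ->
  \sum_(x <- F) f x + (size P - size F) * k <= \sum_(x <- P) f x.
Proof.
move=> uF uP sFP le_kf; set R := [seq x <- P | x \notin F].
have perm_P : perm_eq P (F ++ R).
  rewrite -(perm_filterC (mem F) P) perm_cat2r; apply: uniq_perm => //.
    exact: filter_uniq.
  by move=> x; rewrite mem_filter; apply/andP/idP => [[]|xF] //; split=> //; apply: sFP.
rewrite (perm_big _ perm_P) big_cat leq_add2l (perm_size perm_P) size_cat addKn.
by apply: leq_sum_const => x; rewrite mem_filter => /andP [_ /le_kf].
Qed.

Lemma independent_subset (S : pred nat) (mu c : nat) (s : seq (nat * nat)) :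
  all (apery_pair S mu c) s ->
  {subset map fst s <= P1 S mu c} /\ {subset map snd s <= P2 S mu c}.
Proof.
by move/allP=> pairs; split=> _ /mapP [p /pairs /and3P [? ? _] ->].
Qed.

Lemma size_independent_le (S : pred nat) (mu c : nat) (s : seq (nat * nat)) :
  independent S mu c s -> size s <= size (P1 S mu c) /\ size s <= size (P2 S mu c).
Proof.
case/and3P=> /independent_subset [sub1 sub2] uF uG.
by split; [rewrite -(size_map fst) | rewrite -(size_map snd)]; apply: uniq_leq_size.
Qed.

Lemma size_Lset_ge_independent (S : pred nat) (mu c : nat) (s : seq (nat * nat)) :
  numerical_semigroup S -> is_multiplicity S mu -> (forall n, c <= n -> S n) ->
  independent S mu c s ->
  c %/ mu * (1 + size s) + (c + mu) %/ (2 * mu) * (size (P1 S mu c) - size s)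
  + (c + mu) %/ (3 * mu) * (size (P2 S mu c) - size s) <= size (Lset S c).
Proof.
move=> [S0 S_add _] [mu_gt0 S_mu _] S_ge_c /and3P [pairs uF uG].
have [sub1 sub2] := independent_subset pairs.
have [uP1 uP2] : uniq (P1 S mu c) /\ uniq (P2 S mu c).
  by split; apply: filter_uniq; apply: iota_uniq.
have bound1 : {in P1 S mu c, forall a, (c + mu) %/ (2 * mu) <= chain_len mu c a}.
  by move=> a /mem_P1 [_ _ lt]; apply: (leq_divn_chain_len (m := 1) mu_gt0); rewrite mul1n.
have bound2 : {in P2 S mu c, forall b, (c + mu) %/ (3 * mu) <= chain_len mu c b}.
  by move=> b /mem_P2 [_ _ _ lt]; exact: (leq_divn_chain_len (m := 2) mu_gt0).
have sum_pairs : size s * (c %/ mu) <=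
    \sum_(a <- map fst s) chain_len mu c a + \sum_(b <- map snd s) chain_len mu c b.
  rewrite !big_map -big_split /=; apply: leq_sum_const => -[a b].
  move/allP: pairs => pairs /pairs /and3P [_ _ /=].
  by move/(apery_lt_add_conductor S_ge_c); apply: chain_len_pair.
have := sum_chain_len_le_Lset S_add S_mu mu_gt0 c (uniq_0_P1_P2 S mu c)
          (all_apery_0_P1_P2 S_mu mu_gt0 c S0).
rewrite big_cons big_cat /=.
have := leq_sum_uniq_subset uF uP1 sub1 bound1; have := leq_sum_uniq_subset uG uP2 sub2 bound2.
have := chain_len0 c mu_gt0.
move: sum_pairs; rewrite !size_map.
(* The sums and sizes occur with convertible but syntactically different implicit
   types, which lia would take for distinct atoms. *)
set q1 := size (P1 S mu c); set q2 := size (P2 S mu c).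
set A := \sum_(x <- P1 S mu c) _; set B := \sum_(x <- P2 S mu c) _.
set C := \sum_(x <- map fst s) _; set D := \sum_(x <- map snd s) _.
lia.
Qed.

Lemma divzB_add1 (x d : int) : d != 0%R -> (divz (x - d) d + 1 = divz x d)%R.
Proof.
by move=> d_neq0; rewrite addrC -(divzMDl 1 (x - d) d_neq0) mul1r (addrC d) subrK.
Qed.

Theorem proposition3p3 (S : pred nat) (mu c a2 sigma : nat) :
  numerical_semigroup S ->
  is_multiplicity S mu ->
  is_conductor S c ->
  (* a2 is the second smallest minimal generator (so nu >= 2) *)
  mingen S a2 -> a2 != mu ->
  (forall a, mingen S a -> a != mu -> a2 <= a) ->
  c + mu < 3 * a2 ->
  is_max_indep S mu c sigma ->
  ((c %/ mu)%:Z * (1 + sigma%:Z)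
   + (divz (c%:Z - mu%:Z) (2 * mu)%:Z + 1) * ((size (P1 S mu c))%:Z - sigma%:Z)
   + (divz (c%:Z - (2 * mu)%:Z) (3 * mu)%:Z + 1) * ((size (P2 S mu c))%:Z - sigma%:Z)
   <= (size (Lset S c))%:Z)%R.
Proof.
move=> nsS mulS [S_ge_c _] _ _ _ _ [[s [indep <-]] _].
have mu_gt0 : 0 < mu by case: mulS.
have [le_s_P1 le_s_P2] := size_independent_le indep.
have := size_Lset_ge_independent nsS mulS S_ge_c indep.
have -> : (c%:Z - mu%:Z = (c + mu)%:Z - (2 * mu)%:Z)%R by lia.
have -> : (c%:Z - (2 * mu)%:Z = (c + mu)%:Z - (3 * mu)%:Z)%R by lia.
rewrite !divzB_add1 ?eqz_nat -?lt0n ?muln_gt0 ?mu_gt0 // !divz_nat.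
by rewrite !subzn // -[(1 + _)%R]PoszD -!PoszM -!PoszD lez_nat.
Qed.
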